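(* Let $P=\Bbbk[x_1,x_2,x_3]$ with Poisson bracket $\{x_1,x_2\}=x_1x_2$, $\{x_2,x_3\}=3x_1^2+2x_1x_2+x_2x_3$, $\{x_3,x_1\}=x_1^2+x_1x_3$. If $G$ is a nontrivial finite subgroup of $\mathrm{PAut}_{\mathrm{gr}}(P)$ generated by Poisson reflections, then $P^G$ is not isomorphic to $P$ as Poisson algebras.
   Context: $\Bbbk$ is algebraically closed of characteristic $0$; $P$ has the standard grading. $\mathrm{PAut}_{\mathrm{gr}}(P)$ is the group of degree-preserving bijective algebra homomorphisms preserving the bracket. A Poisson reflection is a finite-order $\phi\in\mathrm{PAut}_{\mathrm{gr}}(P)$ such that $\phi|_{P_1}$ has eigenvalues $1,1,\xi$ with $\xi\neq1$ a primitive root of unity. $P^G$ is the subalgebra of $G$-invariants with the restricted bracket. *)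

From HB Require Import structures.
From mathcomp Require Import all_boot all_order all_algebra.
From mathcomp Require Import mpoly.
From Stdlib Require List.
Set Implicit Arguments. Unset Strict Implicit. Unset Printing Implicit Defensive.
Import GRing.Theory.
Local Open Scope ring_scope.

Section Poisson.
Variable K : fieldType.

(* P = K[x1,x2,x3]; the variables x1,x2,x3 are 'X_0, 'X_1, 'X_2. *)
Definition Pvar (i : nat) : {mpoly K[3]} := 'X_(inord i).

Definition b12 : {mpoly K[3]} := Pvar 0 * Pvar 1.
Definition b23 : {mpoly K[3]} :=
  3%:R * Pvar 0 ^+ 2 + 2%:R * Pvar 0 * Pvar 1 + Pvar 1 * Pvar 2.
Definition b31 : {mpoly K[3]} := Pvar 0 ^+ 2 + Pvar 0 * Pvar 2.

Definition gbr (i j : 'I_3) : {mpoly K[3]} :=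
  match nat_of_ord i, nat_of_ord j with
  | 0, 1 => b12 | 1, 0 => - b12
  | 1, 2 => b23 | 2, 1 => - b23
  | 2, 0 => b31 | 0, 2 => - b31
  | _, _ => 0
  end.

(* the Poisson bracket on P: the unique biderivation extending gbr *)
Definition pbr (f g : {mpoly K[3]}) : {mpoly K[3]} :=
  \sum_(i < 3) \sum_(j < 3) (mderiv i f * mderiv j g) * gbr i j.

Definition endo := {mpoly K[3]} -> {mpoly K[3]}.

Definition is_PAut_gr (phi : endo) : Prop :=
  (forall f g, phi (f + g) = phi f + phi g)/\
      (forall f g, phi (f * g) = phi f * phi g)/\
      phi 1 = 1/\
      (forall (c : K) f, phi (c *: f) = c *: phi f)/\
      bijective phi/\
      (forall (d : nat) f, f \is ishomog1 d mdeg -> phi f \is ishomog1 d mdeg)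
    /\ (forall f g, phi (pbr f g) = pbr (phi f) (phi g)).

(* matrix of phi restricted to P_1 in the basis x1,x2,x3
   (row i = coordinates of phi(x_i)) *)
Definition mx_P1 (phi : endo) : 'M[K]_3 :=
  \matrix_(i < 3, j < 3) (phi 'X_i)@_(U_(j))%MM.

Definition is_Poisson_reflection (phi : endo) : Prop :=
  [/\ is_PAut_gr phi,
      (exists2 n : nat, (0 < n)%N & forall f, iter n phi f = f)
    & exists xi : K, [/\ xi != 1,
        (exists2 m : nat, (0 < m)%N & m.-primitive_root xi) &
        char_poly (mx_P1 phi) = ('X - 1%:P) ^+ 2 * ('X - xi%:P)]].

Definition finite_PAut_subgroup (G : endo -> Prop) : Prop :=
  (forall g, G g -> is_PAut_gr g) /\
      (exists s : seq endo, forall g, G g <-> List.In g s)/\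
      G id/\
      (forall g h, G g -> G h -> G (g \o h))
    /\ (forall g, G g -> exists2 h, G h & (h \o g =1 id /\ g \o h =1 id)).

Definition generated_by_reflections (G : endo -> Prop) : Prop :=
  forall g, G g -> exists s : seq endo,
    (forall r, List.In r s -> G r /\ is_Poisson_reflection r) /\
    g =1 foldr (fun r acc => r \o acc) id s.

Definition nontrivial (G : endo -> Prop) : Prop :=
  exists2 g, G g & exists f, g f <> f.

Definition invariants (G : endo -> Prop) (f : {mpoly K[3]}) : Prop :=
  forall g, G g -> g f = f.

Definition Poisson_iso_onto (A : {mpoly K[3]} -> Prop) (psi : endo) : Prop :=
  (forall f g, psi (f + g) = psi f + psi g)/\
      (forall f g, psi (f * g) = psi f * psi g)/\
      psi 1 = 1/\
      (forall (c : K) f, psi (c *: f) = c *: psi f)/\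
      injective psi/\
      (forall f, A (psi f) /\ (A f -> exists f', psi f' = f))
    /\ (forall f g, psi (pbr f g) = pbr (psi f) (psi g)).

End Poisson.

(* Every Poisson reflection of P is the same map r: x1 |-> -x1, x2 |-> x2, x3 |-> 2 x1 + x3.
   Indeed x1 is normal ({x1, P} is contained in x1 P), so a Poisson automorphism sends x1 to the
   only normal line of P_1, namely K x1; comparing the images of the three structure brackets and
   the eigenvalues 1, 1, xi then fixes the whole matrix.  Hence r lies in G, and P^G contains
   x2, x1 + x3 and x1^2, whose Jacobian determinant is 2 x1.

   Let psi : P -> P^G be a Poisson isomorphism and D its Jacobian determinant.  By the chain rule
   D divides 2 x1, and since r o psi = psi and the Jacobian determinant of r is -1, D is
   anti-invariant under r, so D is not a constant: D = c x1 with c <> 0.  But the bracket is the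
   Jacobian bracket {f, g} = det (grad f, grad g, grad pot) of pot = x1^3 + x1^2 x2 + x1 x2 x3,
   so grad (psi pot) = D grad pot, and the symmetry of second derivatives gives
   d_3 D * d_1 pot = d_1 D * d_3 pot, i.e. 0 = c x1 x2. *)

From HB Require Import structures.
From mathcomp Require Import all_boot all_order all_algebra.
From mathcomp Require Import mpoly.
From mathcomp Require Import ring zify.
Set Implicit Arguments. Unset Strict Implicit. Unset Printing Implicit Defensive.
Import GRing.Theory.
Local Open Scope ring_scope.

Section MpolyJacobian.
Variables (R : comNzRingType) (n : nat).
Notation P := {mpoly R[n]}.

Lemma mderivXU (i j : 'I_n) : ('X_i : P)^`M(j) = (i == j)%:R.
Proof.
rewrite mderivX mnm1E; case: eqP => [->|_]; last by rewrite scale0r.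
rewrite (_ : U_(j) - U_(j) = 0)%MM ?mpolyX0 ?scale1r //.
by apply/mnmP => k; rewrite mnmBE subnn mnm0E.
Qed.

Lemma additive_morph0 (U V : zmodType) (f : U -> V) : {morph f : x y / x + y} -> f 0 = 0.
Proof. by move=> fD; apply: (addrI (f 0)); rewrite -fD !addr0. Qed.

Definition mpoly_lrmorph (phi : P -> P) (phiD : {morph phi : x y / x + y})
    (phiM : {morph phi : x y / x * y}) (phi1 : phi 1 = 1) (phiZ : scalable phi) :
    {lrmorphism P -> P} :=
  HB.pack phi (GRing.isNmodMorphism.Build _ _ phi (additive_morph0 phiD, phiD))
    (GRing.isMonoidMorphism.Build _ _ phi (phi1, phiM))
    (GRing.isScalable.Build _ _ _ _ phi phiZ).

Definition jacobian m (f : 'I_m -> P) : 'M[P]_(m, n) := \matrix_(k, i) (f k)^`M(i).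

Definition jacobian_det (phi : P -> P) : P := \det (jacobian (fun k => phi 'X_k)).

Section Lrmorphism.
Variable phi : {lrmorphism P -> P}.

Lemma mderiv_lrmorph p i :
  (phi p)^`M(i) = \sum_(k < n) phi p^`M(k) * (phi 'X_k)^`M(i).
Proof.
pose chain q := forall i, (phi q)^`M(i) = \sum_(k < n) phi q^`M(k) * (phi 'X_k)^`M(i).
have chainD q r : chain q -> chain r -> chain (q + r).
  move=> hq hr j; rewrite rmorphD mderivD hq hr -big_split.
  by apply: eq_bigr => k _; rewrite mderivD rmorphD mulrDl.
have chainM q r : chain q -> chain r -> chain (q * r).
  move=> hq hr j; rewrite rmorphM mderivM hq hr mulr_suml mulr_sumr -big_split.
  by apply: eq_bigr => k _; rewrite mderivM !rmorphD !rmorphM /=; ring.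
have chainZ c q : chain q -> chain (c *: q).
  move=> hq j; rewrite linearZ mderivZ hq scaler_sumr.
  by apply: eq_bigr => k _; rewrite mderivZ linearZ scalerAl.
have chain1 : chain 1.
  by move=> j; rewrite rmorph1 -mpolyC1 mderivC big1 // => k _; rewrite mderivC rmorph0 mul0r.
have chainX j : chain 'X_j.
  move=> i'; rewrite (bigD1 j) //= big1 => [|k /negbTE kj]; last first.
    by rewrite mderivXU eq_sym kj rmorph0 mul0r.
  by rewrite mderivXU eqxx rmorph1 mul1r addr0.
move: i; elim/mpolyind: p => [|c m p _ _ hp].
  by move=> j; rewrite rmorph0 mderiv0 big1 // => k _; rewrite mderiv0 rmorph0 mul0r.
apply: chainD => //; apply: chainZ; rewrite mpolyXE_id.
apply: (big_ind chain chain1 chainM) => k _.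
by elim: (m k) => [|e ih]; [rewrite expr0 | rewrite exprS; apply: chainM].
Qed.

Lemma jacobian_lrmorph m (f : 'I_m -> P) :
  jacobian (phi \o f) = map_mx phi (jacobian f) *m jacobian (fun k => phi 'X_k).
Proof.
apply/matrixP => j i; rewrite !mxE /= mderiv_lrmorph.
by apply: eq_bigr => k _; rewrite !mxE.
Qed.

Lemma det_jacobian_lrmorph (f : 'I_n -> P) :
  \det (jacobian (phi \o f)) = phi (\det (jacobian f)) * jacobian_det phi.
Proof. by rewrite jacobian_lrmorph det_mulmx det_map_mx. Qed.

End Lrmorphism.

Lemma mderiv_gradient_factor (D C F : P) : (forall i, F^`M(i) = D * C^`M(i)) ->
  forall i j, D^`M(j) * C^`M(i) = D^`M(i) * C^`M(j).
Proof.
move=> hF i j; have := mderiv_comm i j F; rewrite !hF !mderivM mderiv_comm.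
by move/addIr.
Qed.

Lemma homog1E (p : P) : p \is 1.-homog -> p = \sum_i p@_U_(i) *: 'X_i.
Proof.
move=> hp; apply/mpolyP => m; rewrite raddf_sum /=.
case: (boolP (mdeg m == 1%N)) => [/mdeg1P [i /eqP ->]|hm].
  rewrite (bigD1 i) //= big1 => [|j /negbTE ji]; last by rewrite mcoeffZ mcoeffX eq_mnm1 ji mulr0.
  by rewrite mcoeffZ mcoeffX eqxx mulr1 addr0.
rewrite (dhomog_nemf_coeff hp hm) big1 // => i _.
by rewrite mcoeffZ mcoeffX; case: eqP => [e|]; [move: hm; rewrite -e mdeg1 | rewrite mulr0].
Qed.

End MpolyJacobian.

Lemma det_mx33 (R : comNzRingType) (A : 'M[R]_3) :
  \det A = A 0 0 * (A 1 1 * A 2 2 - A 1 2 * A 2 1)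
         - A 0 1 * (A 1 0 * A 2 2 - A 1 2 * A 2 0)
         + A 0 2 * (A 1 0 * A 2 1 - A 1 1 * A 2 0).
Proof.
(* Indexing by nat lets the ordinals produced by the expansion compute to numerals. *)
pose B (i j : nat) := A (inord i) (inord j).
have -> : A = \matrix_(i, j) B i j by apply/matrixP => i j; rewrite mxE /B !inord_val.
rewrite (expand_det_row _ 0) !big_ord_recr big_ord0 /cofactor /=.
rewrite !(expand_det_row _ 0) !big_ord_recr !big_ord0 /cofactor /= !det_mx11 !mxE /=.
rewrite /bump /= -[(1 %% 3)%N]/1%N -[((1 + 1) %% 3)%N]/2%N !(addn0, add0n, add1n).
ring.
Qed.

Lemma ord3_cases (i : 'I_3) : [\/ i = 0, i = 1 | i = 2].
Proof.
by case: i => [[|[|[|//]]] hi]; [constructor 1 | constructor 2 | constructor 3]; apply/val_inj.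
Qed.

Lemma big_ord3 (T : Type) (idx : T) (op : Monoid.law idx) (F : 'I_3 -> T) :
  \big[op/idx]_(i < 3) F i = op (op (F 0) (F 1)) (F 2).
Proof.
by rewrite !big_ord_recr big_ord0 /= Monoid.mul1m; congr (op (op (F _) (F _)) (F _)); apply/val_inj.
Qed.

Section FieldIdentities.
Variable K : fieldType.
Hypotheses (two_neq0 : 2 != 0 :> K) (three_neq0 : 3 != 0 :> K).

(* The value at (x, y, z) of the bracket of two linear forms, see meval_pbr_lin. *)
Definition linbr (a0 a1 a2 b0 b1 b2 x y z : K) :=
  (a0 * b1 - a1 * b0) * (x * y) + (a1 * b2 - a2 * b1) * (3 * x ^+ 2 + 2 * x * y + y * z)
  + (a2 * b0 - a0 * b2) * (x ^+ 2 + x * z).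

Lemma eq_lincomb1 (k1 L1 R1 A B : K) : L1 = R1 -> A - B = k1 * (L1 - R1) -> A = B.
Proof. by move=> -> /eqP; rewrite subrr mulr0 subr_eq0 => /eqP. Qed.

Lemma eq_lincomb2 (k1 k2 L1 R1 L2 R2 A B : K) :
  L1 = R1 -> L2 = R2 -> A - B = k1 * (L1 - R1) + k2 * (L2 - R2) -> A = B.
Proof. by move=> -> -> /eqP; rewrite !subrr !mulr0 addr0 subr_eq0 => /eqP. Qed.

Arguments eq_lincomb1 k1 {L1 R1 A B}.
Arguments eq_lincomb2 k1 k2 {L1 R1 L2 R2 A B}.

Lemma linbr_normal_coef (c0 c1 c2 : K) :
  (forall x y z, c0 * x + c1 * y + c2 * z = 0 ->
     [/\ linbr c0 c1 c2 1 0 0 x y z = 0, linbr c0 c1 c2 0 1 0 x y z = 0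
       & linbr c0 c1 c2 0 0 1 x y z = 0]) ->
  c1 = 0 /\ c2 = 0.
Proof.
move=> H.
have [_ E1 E2] := H 0 c2 (- c1) ltac:(ring).
have e1 : c1 * c2 * c2 = linbr c0 c1 c2 0 1 0 0 c2 (- c1) by rewrite /linbr; ring.
have e2 : c1 * c1 * c2 = - linbr c0 c1 c2 0 0 1 0 c2 (- c1) by rewrite /linbr; ring.
rewrite E1 in e1; rewrite E2 oppr0 in e2.
have : (c1 * c2) ^+ 2 = 0 by rewrite -(mulr0 c1) -e1; ring.
move/eqP; rewrite sqrf_eq0 mulf_eq0 => /orP[]/eqP e.
- have [_ F _] := H c2 0 (- c0) ltac:(rewrite e; ring).
  have : 3 * c2 ^+ 3 = - linbr c0 c1 c2 0 1 0 c2 0 (- c0) by rewrite /linbr e; ring.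
  by rewrite F oppr0 => /eqP; rewrite mulf_eq0 (negbTE three_neq0) expf_eq0 /= => /eqP.
- have [F _ G] := H c1 (- c0) 0 ltac:(rewrite e; ring).
  have f1 : c0 * c1 * c1 = linbr c0 c1 c2 1 0 0 c1 (- c0) 0 by rewrite /linbr e; ring.
  have : 3 * c1 ^+ 3 = linbr c0 c1 c2 0 0 1 c1 (- c0) 0 + 3 * (c0 * c1 * c1).
    by rewrite /linbr e; ring.
  rewrite G f1 F mulr0 addr0 => /eqP.
  by rewrite mulf_eq0 (negbTE three_neq0) expf_eq0 /= => /eqP.
Qed.

Lemma linbr_rows (c0 d0 d1 d2 e0 e1 e2 : K) : c0 != 0 ->
  (forall x y z, linbr c0 0 0 d0 d1 d2 x y z = (c0 * x) * (d0 * x + d1 * y + d2 * z)) ->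
  (forall x y z, linbr e0 e1 e2 c0 0 0 x y z
                 = (c0 * x) ^+ 2 + (c0 * x) * (e0 * x + e1 * y + e2 * z)) ->
  (forall x y z, linbr d0 d1 d2 e0 e1 e2 x y z
                 = 3 * (c0 * x) ^+ 2 + 2 * (c0 * x) * (d0 * x + d1 * y + d2 * z)
                   + (d0 * x + d1 * y + d2 * z) * (e0 * x + e1 * y + e2 * z)) ->
  [/\ d0 = 0, d2 = 0, e1 = 0, e2 = c0 + e0 & d1 * e2 = c0 ^+ 2].
Proof.
move=> c0_neq0 HA HB HC.
have c02 := mulf_neq0 c0_neq0 two_neq0.
have hd2 : d2 = 0.
  apply: (mulfI c02); rewrite mulr0.
  by apply: (eq_lincomb2 1 (-1) (HA 1 0 0) (HA 1 0 1)); rewrite /linbr; ring.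
have hd0 : d0 = 0.
  apply: (mulfI c0_neq0); rewrite mulr0.
  by apply: (eq_lincomb1 (-1) (HA 1 0 0)); rewrite /linbr hd2; ring.
have he1 : e1 = 0.
  apply: (mulfI c02); rewrite mulr0.
  by apply: (eq_lincomb2 1 (-1) (HB 1 0 0) (HB 1 1 0)); rewrite /linbr; ring.
have he2 : e2 = c0 + e0.
  by apply: (mulfI c0_neq0); apply: (eq_lincomb1 1 (HB 1 0 0)); rewrite /linbr; ring.
split => //.
by apply: (mulfI three_neq0); apply: (eq_lincomb1 1 (HC 1 0 0)); rewrite /linbr hd0 hd2 he1; ring.
Qed.

Lemma reflection_diagonal (c0 d1 e2 e0 xi : K) : c0 != 0 -> xi != 1 ->
  e2 = c0 + e0 -> d1 * e2 = c0 ^+ 2 ->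
  (forall x, (x - c0) * (x - d1) * (x - e2) = (x - 1) ^+ 2 * (x - xi)) ->
  [/\ c0 = -1, d1 = 1, e2 = 1 & e0 = 2].
Proof.
move=> c0_neq0 xi_neq1 he hde H.
have c3 : c0 ^+ 3 = xi by apply: (eq_lincomb2 (-1) (- c0) (H 0) hde); ring.
have c0_neq1 : c0 != 1 by apply: contraNneq xi_neq1 => c01; rewrite -c3 c01 expr1n.
have cx : c0 = xi.
  have : (c0 - 1) ^+ 2 * (c0 - xi) = 0 by rewrite -H; ring.
  by move/eqP; rewrite mulf_eq0 expf_eq0 /= !subr_eq0 (negbTE c0_neq1) => /eqP.
have cm1 : c0 = -1.
  have : c0 * (c0 - 1) * (c0 + 1) = 0 by apply: (eq_lincomb2 1 (-1) c3 cx); ring.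
  move/eqP; rewrite !mulf_eq0 (negbTE c0_neq0) subr_eq0 (negbTE c0_neq1) /= addr_eq0.
  by move/eqP.
have H2 := H 2; rewrite -cx cm1 in H2; rewrite cm1 in hde.
have s : d1 + e2 = 2.
  apply/eqP; rewrite -subr_eq0; apply/eqP; apply: (mulfI (mulf_neq0 three_neq0 two_neq0)).
  by rewrite mulr0; apply: (eq_lincomb2 (-1) 3 H2 hde); ring.
have d1E : d1 = 1.
  have : (d1 - 1) ^+ 2 = 0 by apply: (eq_lincomb2 d1 (-1) s hde); ring.
  by move/eqP; rewrite sqrf_eq0 subr_eq0 => /eqP.
have e2E : e2 = 1 by rewrite d1E in s; apply: (eq_lincomb1 1 s); ring.
by split => //; apply: (eq_lincomb1 (-1) he); rewrite e2E cm1; ring.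
Qed.

End FieldIdentities.

Section PoissonBracket.
Variable K : fieldType.
Notation P := {mpoly K[3]}.

Lemma PvarE (i : 'I_3) : Pvar K i = 'X_i.
Proof. by rewrite /Pvar inord_val. Qed.

Lemma b12E : b12 K = 'X_0 * 'X_1.
Proof. by rewrite /b12 (PvarE 0) (PvarE 1). Qed.

Lemma b23E : b23 K = 3%:R * 'X_0 ^+ 2 + 2%:R * 'X_0 * 'X_1 + 'X_1 * 'X_2.
Proof. by rewrite /b23 (PvarE 0) (PvarE 1) (PvarE 2). Qed.

Lemma b31E : b31 K = 'X_0 ^+ 2 + 'X_0 * 'X_2.
Proof. by rewrite /b31 (PvarE 0) (PvarE 2). Qed.

Lemma pbrE (f g : P) : pbr f g =
    (f^`M(0) * g^`M(1) - f^`M(1) * g^`M(0)) * b12 K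
  + (f^`M(1) * g^`M(2) - f^`M(2) * g^`M(1)) * b23 K
  + (f^`M(2) * g^`M(0) - f^`M(0) * g^`M(2)) * b31 K.
Proof. by rewrite /pbr !big_ord3 /gbr /=; ring. Qed.

Lemma pbrX01 : pbr 'X_0 'X_1 = b12 K.
Proof. by rewrite pbrE !mderivXU /=; ring. Qed.

Lemma pbrX12 : pbr 'X_1 'X_2 = b23 K.
Proof. by rewrite pbrE !mderivXU /=; ring. Qed.

Lemma pbrX20 : pbr 'X_2 'X_0 = b31 K.
Proof. by rewrite pbrE !mderivXU /=; ring. Qed.

Lemma pbrX0 (f : P) : pbr 'X_0 f = 'X_0 * (f^`M(1) * 'X_1 - f^`M(2) * ('X_0 + 'X_2)).
Proof. by rewrite pbrE !mderivXU b12E b31E /=; ring. Qed.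

(* pbrE and mderiv_pot say that pbr f g = det (grad f, grad g, grad pot). *)
Definition pot : P := 'X_0 ^+ 3 + 'X_0 ^+ 2 * 'X_1 + 'X_0 * 'X_1 * 'X_2.

Lemma mderiv_pot : [/\ pot^`M(0) = b23 K, pot^`M(1) = b31 K & pot^`M(2) = b12 K].
Proof.
rewrite b12E b23E b31E /pot !exprS !expr0 !mulr1.
by split; rewrite !mderivD !mderivM !mderivXU /=; ring.
Qed.

Lemma mderiv_Poisson_pot (psi : {lrmorphism P -> P}) :
  {morph psi : f g / pbr f g} -> forall i, (psi pot)^`M(i) = jacobian_det psi * pot^`M(i).
Proof.
move=> psi_pbr i; have [pot0 pot1 pot2] := mderiv_pot.
rewrite mderiv_lrmorph big_ord3 /= pot0 pot1 pot2.
rewrite -pbrX01 -pbrX12 -pbrX20 !psi_pbr !pbrE /jacobian_det det_mx33 !mxE.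
by case: (ord3_cases i) => ->; rewrite ?pot0 ?pot1 ?pot2; ring.
Qed.

Lemma jacobian_det_Poisson_curl (psi : {lrmorphism P -> P}) :
  {morph psi : f g / pbr f g} ->
  (jacobian_det psi)^`M(2) * b23 K = (jacobian_det psi)^`M(0) * b12 K.
Proof.
move=> psi_pbr; have [pot0 _ pot2] := mderiv_pot.
by rewrite -pot0 -pot2; apply: mderiv_gradient_factor (mderiv_Poisson_pot psi_pbr) 0 2.
Qed.

End PoissonBracket.

Section Reflections.
Variable K : fieldType.
Hypotheses (two_neq0 : 2 != 0 :> K) (three_neq0 : 3 != 0 :> K).
Notation P := {mpoly K[3]}.

Definition lin (a0 a1 a2 : K) : P := a0 *: 'X_0 + a1 *: 'X_1 + a2 *: 'X_2.
Definition pt (x y z : K) (i : 'I_3) : K := [:: x; y; z]`_i.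

Lemma homog1_lin (p : P) : p \is 1.-homog -> p = lin p@_U_(0) p@_U_(1) p@_U_(2).
Proof. by move/homog1E => {1}->; rewrite big_ord3 /=. Qed.

Lemma lin_X : [/\ 'X_0 = lin 1 0 0, 'X_1 = lin 0 1 0 & 'X_2 = lin 0 0 1].
Proof. by rewrite /lin !scale0r !scale1r !addr0 !add0r. Qed.

Lemma meval_lin x y z a0 a1 a2 : meval (pt x y z) (lin a0 a1 a2) = a0 * x + a1 * y + a2 * z.
Proof. by rewrite /lin !mevalD !mevalZ !mevalXU. Qed.

Lemma meval_nat v k : meval v (k%:R : P) = k%:R.
Proof. by rewrite mevalMn meval1. Qed.

Lemma meval_b12 x y z : meval (pt x y z) (b12 K) = x * y.
Proof. by rewrite b12E mevalM !mevalXU. Qed.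

Lemma meval_pbr_lin x y z a0 a1 a2 b0 b1 b2 :
  meval (pt x y z) (pbr (lin a0 a1 a2) (lin b0 b1 b2)) = linbr a0 a1 a2 b0 b1 b2 x y z.
Proof.
have mderiv_lin (i : 'I_3) c0 c1 c2 : (lin c0 c1 c2)^`M(i) = (pt c0 c1 c2 i)%:MP.
  rewrite /lin !mderivD !mderivZ !mderivXU -!alg_mpolyC.
  by case: (ord3_cases i) => -> /=; rewrite !scaler0 ?addr0 ?add0r.
rewrite pbrE !mderiv_lin b12E b23E b31E /=.
by rewrite !(mevalD, mevalM, mevalB, mevalN, mevalC, mevalXU, meval_nat) /linbr /pt /=; ring.
Qed.

Section PoissonAutomorphism.
Variable phi : {lrmorphism P -> P}.
Hypotheses (phi_bij : bijective phi) (phi_homog : forall i, phi 'X_i \is 1.-homog)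
  (phi_pbr : {morph phi : f g / pbr f g}).

Local Notation a := (mx_P1 phi).

Lemma lin_mx_P1 i : phi 'X_i = lin (a i 0) (a i 1) (a i 2).
Proof. by rewrite !mxE; apply: homog1_lin. Qed.

Lemma mx_P1_row0 : [/\ a 0 0 != 0, a 0 1 = 0 & a 0 2 = 0].
Proof.
have [g _ gK] := phi_bij.
have [a01 a02] : a 0 1 = 0 /\ a 0 2 = 0.
  apply: (@linbr_normal_coef _ three_neq0 (a 0 0)) => x y z hv.
  (* phi x1 is normal, so its brackets vanish wherever phi x1 does. *)
  have vanish (k : 'I_3) : meval (pt x y z) (pbr (phi 'X_0) (phi (g 'X_k))) = 0.
    by rewrite -phi_pbr pbrX0 rmorphM /= mevalM (lin_mx_P1 0) meval_lin hv mul0r.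
  have [X0 X1 X2] := lin_X.
  have := vanish 0; have := vanish 1; have := vanish 2.
  by rewrite !gK (lin_mx_P1 0) {1}X0 {1}X1 {1}X2 !meval_pbr_lin.
split=> //; apply/eqP => a00.
have : phi 'X_0 = phi 0 by rewrite raddf0 lin_mx_P1 a00 a01 a02 /lin !scale0r !addr0.
by move/(bij_inj phi_bij)/eqP; rewrite -msize_poly_eq0 msizeX.
Qed.

Lemma Poisson_aut_reflection (xi : K) : xi != 1 ->
  char_poly (mx_P1 phi) = ('X - 1%:P) ^+ 2 * ('X - xi%:P) ->
  [/\ phi 'X_0 = - 'X_0, phi 'X_1 = 'X_1 & phi 'X_2 = 'X_0 *+ 2 + 'X_2].
Proof.
move=> xi_neq1 hchar; have [a00 a01 a02] := mx_P1_row0.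
have E01 := phi_pbr 'X_0 'X_1; have E20 := phi_pbr 'X_2 'X_0; have E12 := phi_pbr 'X_1 'X_2.
rewrite pbrX01 b12E rmorphM /= !lin_mx_P1 a01 a02 in E01.
rewrite pbrX20 b31E rmorphD !rmorphM ?rmorphXn /= !lin_mx_P1 a01 a02 in E20.
rewrite pbrX12 b23E !rmorphD !rmorphM ?rmorphXn !rmorph_nat /= !lin_mx_P1 a01 a02 in E12.
have HA x y z : linbr (a 0 0) 0 0 (a 1 0) (a 1 1) (a 1 2) x y z
                = (a 0 0 * x) * (a 1 0 * x + a 1 1 * y + a 1 2 * z).
  by have := congr1 (meval (pt x y z)) E01; rewrite meval_pbr_lin mevalM !meval_lin => <-; ring.
have HB x y z : linbr (a 2 0) (a 2 1) (a 2 2) (a 0 0) 0 0 x y z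
                = (a 0 0 * x) ^+ 2 + (a 0 0 * x) * (a 2 0 * x + a 2 1 * y + a 2 2 * z).
  have := congr1 (meval (pt x y z)) E20.
  by rewrite meval_pbr_lin mevalD !mevalM !meval_lin => <-; ring.
have HC x y z : linbr (a 1 0) (a 1 1) (a 1 2) (a 2 0) (a 2 1) (a 2 2) x y z
    = 3 * (a 0 0 * x) ^+ 2 + 2 * (a 0 0 * x) * (a 1 0 * x + a 1 1 * y + a 1 2 * z)
      + (a 1 0 * x + a 1 1 * y + a 1 2 * z) * (a 2 0 * x + a 2 1 * y + a 2 2 * z).
  have := congr1 (meval (pt x y z)) E12.
  by rewrite meval_pbr_lin !mevalD !mevalM !meval_nat !meval_lin => <-; ring.
have [a10 a12 a21 a22 a1122] := linbr_rows two_neq0 three_neq0 a00 HA HB HC.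
have trig : is_trig_mx (mx_P1 phi).
  by apply/is_trig_mxP => i j; case: (ord3_cases i) => ->; case: (ord3_cases j) => ->.
have hdiag x : (x - a 0 0) * (x - a 1 1) * (x - a 2 2) = (x - 1) ^+ 2 * (x - xi).
  have := congr1 (horner^~ x) (char_poly_trig trig).
  by rewrite hchar big_ord3 /= !hornerE => ->.
have [a00E a11E a22E a20E] := reflection_diagonal two_neq0 three_neq0 a00 xi_neq1 a22 a1122 hdiag.
rewrite !lin_mx_P1 a00E a01 a02 a10 a11E a12 a20E a21 a22E /lin !scale0r !addr0 !add0r.
by rewrite scaleN1r !scale1r scaler_nat.
Qed.

End PoissonAutomorphism.

Lemma Poisson_reflectionE (r : P -> P) : is_Poisson_reflection r ->
  [/\ r 'X_0 = - 'X_0, r 'X_1 = 'X_1 & r 'X_2 = 'X_0 *+ 2 + 'X_2].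
Proof.
case=> -[rD [rM [r1 [rZ [r_bij [r_homog r_pbr]]]]]] _ [xi [xi_neq1 _ hchar]].
have X_homog (i : 'I_3) : ('X_i : P) \is 1.-homog by rewrite dhomogX /= mdeg1.
exact: (@Poisson_aut_reflection (mpoly_lrmorph rD rM r1 rZ) r_bij
          (fun i => r_homog 1%N _ (X_homog i)) r_pbr _ xi_neq1 hchar).
Qed.

Definition inv_gens (j : 'I_3) : P := [:: 'X_1; 'X_0 + 'X_2; 'X_0 ^+ 2]`_j.

Lemma Poisson_reflection_fix (r : P -> P) : is_Poisson_reflection r ->
  forall j, r (inv_gens j) = inv_gens j.
Proof.
move=> hr j; have [r0 r1 r2] := Poisson_reflectionE hr; have [[rD [rM _]] _ _] := hr.
case: (ord3_cases j) => ->; rewrite /inv_gens /= ?expr2 ?rD ?rM ?r0 ?r1 ?r2 ?mulrNN //.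
by rewrite mulr2n !addrA addNr add0r.
Qed.

Lemma reflections_fix (G : endo K -> Prop) : generated_by_reflections G ->
  forall g, G g -> forall j, g (inv_gens j) = inv_gens j.
Proof.
move=> hgen g /hgen [s [hs gE]] j; rewrite gE {gE}.
elim: s hs => [|r s IH] hs //=.
rewrite IH => [|r' s_r']; last by apply: hs; right.
by apply: Poisson_reflection_fix; apply: (hs r (or_introl erefl)).2.
Qed.

End Reflections.

Arguments inv_gens {K} j.

Section NoPoissonIsomorphism.
Variable K : fieldType.
Hypotheses (two_neq0 : 2 != 0 :> K) (three_neq0 : 3 != 0 :> K).
Notation P := {mpoly K[3]}.

Lemma jacobian_det_inv_gens : \det (jacobian inv_gens) = 2%:R * 'X_0 :> P.
Proof. by rewrite det_mx33 !mxE /inv_gens /= expr2 !mderivD !mderivM !mderivXU /=; ring. Qed.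

Lemma jacobian_det_reflection (r : P -> P) : is_Poisson_reflection r -> jacobian_det r = -1.
Proof.
move=> /(Poisson_reflectionE two_neq0 three_neq0) [r0 r1 r2].
by rewrite /jacobian_det det_mx33 !mxE r0 r1 r2 !(mderivN, mderivD, mderivMn, mderivXU) /=; ring.
Qed.

Lemma msize_2X0 : msize (2%:R * 'X_0 : P) = 2%N.
Proof.
by rewrite -mpolyC_nat mul_mpolyC (mmeasureZ _ _ two_neq0) mmeasureX; congr _.+1; apply: mdeg1.
Qed.

Lemma factor_of_2X0 (E D : P) : E * D = 2%:R * 'X_0 -> (1 < msize D)%N ->
  exists2 c : K, c != 0 & D = c *: 'X_0.
Proof.
move=> hED hD.
have ED_neq0 : E * D != 0 by rewrite hED -msize_poly_eq0 msize_2X0.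
have [E_neq0 D_neq0] : E != 0 /\ D != 0.
  by split; apply: contraNneq ED_neq0 => ->; rewrite ?mul0r ?mulr0.
have := msizeM E_neq0 D_neq0; rewrite hED msize_2X0 => hs.
have /msize1_polyC EC : (msize E <= 1)%N.
  have le1 (a b : nat) : (2 = (a + b).-1 -> 1 < b -> a <= 1)%N by rewrite -subn1; lia.
  exact: le1 hs hD.
set e := E@_0 in EC.
have e_neq0 : e != 0 by apply: contraNneq E_neq0 => e0; rewrite EC e0 mpolyC0.
exists (e^-1 * 2); first by rewrite mulf_neq0 ?invr_eq0.
apply: (scalerI e_neq0); rewrite -mul_mpolyC -EC hED scalerA mulrA mulfV // mul1r.
by rewrite scaler_nat mulr_natl.
Qed.

Lemma no_Poisson_lrmorph_onto_invariants (psi : {lrmorphism P -> P}) (r : P -> P) :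
  is_Poisson_reflection r -> {morph psi : f g / pbr f g} ->
  (forall f, r (psi f) = psi f) -> (forall j, exists F, psi F = inv_gens j) -> False.
Proof.
move=> hr psi_pbr r_psi psi_onto; have [F psiF] := fin_all_exists psi_onto.
have hED : psi (\det (jacobian F)) * jacobian_det psi = 2%:R * 'X_0.
  rewrite -jacobian_det_inv_gens -det_jacobian_lrmorph.
  by congr (\det _); apply/matrixP => j i; rewrite !mxE /= psiF.
have [[rD [rM [r1 [rZ _]]]] _ _] := hr; pose rho := mpoly_lrmorph rD rM r1 rZ.
have D_anti : jacobian_det psi = - rho (jacobian_det psi).
  have := det_jacobian_lrmorph rho (fun k => psi 'X_k).
  rewrite (jacobian_det_reflection hr) mulrN1 => <-.
  by congr (\det _); apply/matrixP => j i; rewrite !mxE /= r_psi.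
have curl := jacobian_det_Poisson_curl psi_pbr.
case: (leqP (msize (jacobian_det psi)) 1) => [/msize1_polyC DC | hD].
  set c := _@_0 in DC; have := congr1 (meval (pt 0 0 0)) D_anti.
  rewrite DC -alg_mpolyC rmorph_alg alg_mpolyC mevalN mevalC => /eqP.
  rewrite -addr_eq0 -mulr2n -mulr_natl mulf_eq0 (negbTE two_neq0) /= => /eqP c0.
  by move/eqP: hED; rewrite DC c0 mpolyC0 mulr0 eq_sym -msize_poly_eq0 msize_2X0.
have [c c_neq0 Dc] := factor_of_2X0 hED hD.
move: curl; rewrite Dc !mderivZ !mderivXU /= scaler0 mul0r.
move/(congr1 (meval (pt 1 1 0))); rewrite meval0 mevalM mevalZ meval1 meval_b12 /=.
by move/eqP; rewrite eq_sym !mulr1 (negbTE c_neq0).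
Qed.

End NoPoissonIsomorphism.

Theorem lemma3p8p2 (K : closedFieldType) (charK : [pchar K] =i pred0)
  (G : endo K -> Prop) :
  finite_PAut_subgroup G -> generated_by_reflections G -> nontrivial G ->
  ~ (exists psi : endo K, Poisson_iso_onto (invariants G) psi).
Proof.
move=> _ hgen [g Gg [f gf]] [psi [psiD [psiM [psi1 [psiZ [_ [psi_inv psi_pbr]]]]]]].
have [two_neq0 three_neq0] : 2 != 0 :> K /\ 3 != 0 :> K.
  by rewrite !(pcharf0P K).1.
have [r Gr hr] : exists2 r, G r & is_Poisson_reflection r.
  have [[|r s] [hs gE]] := hgen g Gg; first by case: gf; rewrite gE.
  by case: (hs r (or_introl erefl)); exists r.
apply: (no_Poisson_lrmorph_onto_invariants two_neq0 three_neq0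
          (psi := mpoly_lrmorph psiD psiM psi1 psiZ) hr psi_pbr).
- by move=> h; apply: (psi_inv h).1.
- move=> j; apply: (psi_inv _).2 => h Gh.
  exact: (reflections_fix _ _ hgen Gh).
Qed.
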